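(* Let $a,b$ be elements of $\mathrm{Homeo}_+(I)$, or elements of $\mathrm{Homeo}_+(S^1)$ each having a fixed point, and suppose that for some integers $n_1,n_2,n_3,m_1,m_2,m_3$ with $m_1+m_2\neq m_3$ they satisfy $a^{n_1}b^{m_3}a^{n_2}=b^{m_1}a^{n_3}b^{m_2}$. If $J$ is a nontrivial interval contained in $\mathrm{Fix}(a)$, then either $J\subset\mathrm{Fix}(b)$ or $J\cap\mathrm{Fix}(b)=\emptyset$.
   Context: $\mathrm{Homeo}_+(M)$ denotes the group of orientation-preserving homeomorphisms of $M$; $I=[0,1]$; $\mathrm{Fix}(f)$ is the fixed point set of $f$. *)

From Stdlib Require Import Reals ZArith.
Open Scope R_scope.

Definition inI (x : R) : Prop := 0 <= x <= 1.

(** (f, g) represents an element of Homeo_+(I): f maps I into I,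
    g is its inverse on I, f is strictly increasing and continuous on I. *)
Definition is_homeo_plus_I (f g : R -> R) : Prop :=
  (forall x, inI x -> inI (f x)) /\
  (forall x, inI x -> inI (g x)) /\
  (forall x, inI x -> g (f x) = x) /\
  (forall x, inI x -> f (g x) = x) /\
  (forall x y, inI x -> inI y -> x < y -> f x < f y) /\
  (forall x, inI x -> forall eps, 0 < eps -> exists delta, 0 < delta /\
      forall y, inI y -> Rabs (y - x) < delta -> Rabs (f y - f x) < eps).

(** (F, G) is a lift to R of an element of Homeo_+(S^1), S^1 = R/Z:
    F is a continuous strictly increasing bijection of R commuting with
    the unit translation, G its inverse.  Every element of Homeo_+(S^1)
    has such a lift, unique up to integer translations. *)
Definition is_lift_homeo_plus_S1 (F G : R -> R) : Prop :=
  continuity F /\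
  (forall x y, x < y -> F x < F y) /\
  (forall x, F (x + 1) = F x + 1) /\
  (forall x, G (F x) = x) /\
  (forall x, F (G x) = x).

(** x projects to a fixed point of the circle map lifted by F. *)
Definition liftFix (F : R -> R) (x : R) : Prop :=
  exists k : Z, F x = x + IZR k.

Definition zpow (f g : R -> R) (n : Z) : R -> R :=
  fun x => match n with
           | Z0 => x
           | Zpos p => Nat.iter (Pos.to_nat p) f x
           | Zneg p => Nat.iter (Pos.to_nat p) g x
           end.

Definition is_interval (J : R -> Prop) : Prop :=
  forall x y z, J x -> J y -> x <= z <= y -> J z.

Definition nontrivial (J : R -> Prop) : Prop :=
  exists x y, J x /\ J y /\ x < y.

From Stdlib Require Import Reals ZArith Lia Lra Classical.
Open Scope R_scope.

(* Suppose b fixes some x0 in J but moves some y in J.  Iterating b (or its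
   inverse) moves y monotonically towards x0, so a long stretch of the b-orbit
   of y stays between y and x0, inside J and hence inside Fix(a).  At a point z
   in the middle of that stretch every power of a in the relation acts
   trivially, leaving b^m3 z = b^(m1+m2) z; but an increasing map that moves z
   has no nonzero power fixing z, so m3 = m1 + m2.
   On the circle, a lift F with F x0 = x0 + k at a fixed point x0 satisfies
   |F x - x - k| < 1 everywhere, so the lifts of fixed points are exactly the
   fixed points of F - k; the relation between the normalized lifts holds up to
   an integer translation, which must vanish at a common fixed point. *)

Definition incr_bij_on (D : R -> Prop) (f g : R -> R) : Prop :=
  (forall x, D x -> D (f x)) /\ (forall x, D x -> D (g x)) /\
  (forall x, D x -> g (f x) = x) /\ (forall x, D x -> f (g x) = x) /\
  (forall x y, D x -> D y -> x < y -> f x < f y).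

Definition between (u v w : R) : Prop := u <= w <= v \/ v <= w <= u.

Definition towards (x0 y w : R) : Prop := (x0 <= y /\ w <= y) \/ (y <= x0 /\ y <= w).

Lemma interval_between J u v w :
  is_interval J -> J u -> J v -> between u v w -> J w.
Proof. intros hJ Ju Jv [b | b]; [apply (hJ u v) | apply (hJ v u)]; auto. Qed.

Lemma zpow_opp (f g : R -> R) n x : zpow f g (- n) x = zpow g f n x.
Proof. destruct n; reflexivity. Qed.

Lemma zpow_iter (f g : R -> R) n x : zpow f g n x =
  if (0 <=? n)%Z then Nat.iter (Z.to_nat n) f x else Nat.iter (Z.to_nat (- n)) g x.
Proof. destruct n; reflexivity. Qed.

Lemma iter_in (D : R -> Prop) h :
  (forall x, D x -> D (h x)) -> forall n x, D x -> D (Nat.iter n h x).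
Proof. intros hD n x Dx; induction n; simpl; auto. Qed.

Lemma iter_fixed (h : R -> R) n x : h x = x -> Nat.iter n h x = x.
Proof. intros e; induction n; simpl; congruence. Qed.

Lemma iter_strict_incr_nonfixed (D : R -> Prop) h :
  (forall x, D x -> D (h x)) -> (forall x y, D x -> D y -> x < y -> h x < h y) ->
  forall z, D z -> h z <> z -> forall n, Nat.iter (S n) h z <> z.
Proof.
  intros hD hmono z Dz hz n.
  assert (Dn : forall n, D (Nat.iter n h z)) by (intros; apply iter_in; auto).
  destruct (Rdichotomy _ _ hz) as [lt | gt].
  - enough (Hn : forall n, Nat.iter (S n) h z < z) by (specialize (Hn n); lra).
    intros k; induction k; [exact lt |].
    change (h (Nat.iter (S k) h z) < z).
    apply Rlt_trans with (h z); auto.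
  - enough (Hn : forall n, z < Nat.iter (S n) h z) by (specialize (Hn n); lra).
    intros k; induction k; [exact gt |].
    change (z < h (Nat.iter (S k) h z)).
    apply Rlt_trans with (h z); auto.
Qed.

Section IncreasingBijection.

Variables (D : R -> Prop) (f g : R -> R).
Hypothesis hfg : incr_bij_on D f g.

Lemma incr_bij_on_sym : incr_bij_on D g f.
Proof.
  destruct hfg as (fD & gD & gf & fg & fmono).
  repeat split; auto.
  intros x y Dx Dy xy.
  destruct (Rtotal_order (g x) (g y)) as [? | [E | E]]; auto.
  - apply (f_equal f) in E. rewrite !fg in E; auto. lra.
  - apply fmono in E; auto. rewrite !fg in E; auto. lra.
Qed.

Lemma incr_bij_on_le x y : D x -> D y -> x <= y -> f x <= f y.
Proof.
  destruct hfg as (_ & _ & _ & _ & fmono).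
  intros Dx Dy [lt | <-]; [left; auto | right; reflexivity].
Qed.

Lemma zpow_in n x : D x -> D (zpow f g n x).
Proof.
  destruct hfg as (fD & gD & _).
  intros Dx. rewrite zpow_iter. destruct (0 <=? n)%Z; apply iter_in; auto.
Qed.

Lemma zpow_succ n x : D x -> zpow f g (n + 1) x = f (zpow f g n x).
Proof.
  destruct hfg as (_ & gD & _ & fg & _).
  intros Dx. rewrite !zpow_iter.
  destruct (Z.leb_spec 0 n), (Z.leb_spec 0 (n + 1)); try lia.
  - replace (Z.to_nat (n + 1)) with (S (Z.to_nat n)) by lia. reflexivity.
  - replace n with (-1)%Z by lia. simpl. symmetry; auto.
  - replace (Z.to_nat (- n)) with (S (Z.to_nat (- (n + 1)))) by lia. simpl.
    rewrite fg; auto. apply iter_in; auto.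
Qed.

Lemma zpow_pred n x : D x -> zpow f g (n - 1) x = g (zpow f g n x).
Proof.
  destruct hfg as (_ & _ & gf & _).
  intros Dx. replace n with (n - 1 + 1)%Z at 2 by lia.
  rewrite zpow_succ, gf; auto. apply zpow_in; auto.
Qed.

Lemma zpow_add i j x : D x -> zpow f g (i + j) x = zpow f g i (zpow f g j x).
Proof.
  intros Dx. induction i as [| i IH | i IH] using Z.peano_ind; [reflexivity | |].
  - replace (Z.succ i + j)%Z with (i + j + 1)%Z by lia. unfold Z.succ.
    rewrite !zpow_succ, IH; auto. apply zpow_in; auto.
  - replace (Z.pred i + j)%Z with (i + j - 1)%Z by lia.
    replace (Z.pred i) with (i - 1)%Z by lia.
    rewrite !zpow_pred, IH; auto. apply zpow_in; auto.
Qed.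

Lemma zpow_fixed n x : D x -> f x = x -> zpow f g n x = x.
Proof.
  destruct hfg as (_ & _ & gf & _).
  intros Dx e. assert (g x = x) by (rewrite <- e at 1; auto).
  rewrite zpow_iter. destruct (0 <=? n)%Z; apply iter_fixed; auto.
Qed.

Lemma zpow_nonfixed n z : D z -> f z <> z -> zpow f g n z = z -> n = 0%Z.
Proof.
  destruct hfg as (fD & gD & _ & fg & fmono).
  destruct incr_bij_on_sym as (_ & _ & _ & _ & gmono).
  intros Dz fz e. destruct n as [| p | p]; [reflexivity | exfalso ..].
  - simpl in e. rewrite <- (Nat.succ_pred_pos (Pos.to_nat p)) in e by lia.
    exact (iter_strict_incr_nonfixed D f fD fmono z Dz fz _ e).
  - assert (gz : g z <> z) by (intro E; apply fz; rewrite <- E at 1; auto).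
    simpl in e. rewrite <- (Nat.succ_pred_pos (Pos.to_nat p)) in e by lia.
    exact (iter_strict_incr_nonfixed D g gD gmono z Dz gz _ e).
Qed.

Lemma zpow_inj_nonfixed i j z :
  D z -> f z <> z -> zpow f g i z = zpow f g j z -> i = j.
Proof.
  intros Dz fz e. apply (f_equal (zpow f g (- j))) in e.
  rewrite <- !zpow_add, Z.add_opp_diag_l in e by auto.
  enough (- j + i = 0)%Z by lia.
  exact (zpow_nonfixed _ z Dz fz e).
Qed.

Lemma iter_between x0 y n :
  D x0 -> D y -> f x0 = x0 -> towards x0 y (f y) -> between x0 y (Nat.iter n f y).
Proof.
  intros Dx0 Dy fx0 hy.
  assert (hby : between x0 y (f y)).
  { destruct hy as [[l1 l2] | [l1 l2]].
    - pose proof (incr_bij_on_le x0 y Dx0 Dy l1). left; lra.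
    - pose proof (incr_bij_on_le y x0 Dy Dx0 l1). right; lra. }
  induction n as [| n IH]; simpl; [unfold between; lra |].
  assert (Dw : D (Nat.iter n f y)) by (apply iter_in; auto; apply hfg).
  set (w := Nat.iter n f y) in *.
  destruct IH as [[l1 l2] | [l1 l2]].
  - pose proof (incr_bij_on_le x0 w Dx0 Dw l1).
    pose proof (incr_bij_on_le w y Dw Dy l2).
    left. destruct hby as [[] | []]; lra.
  - pose proof (incr_bij_on_le y w Dy Dw l1).
    pose proof (incr_bij_on_le w x0 Dw Dx0 l2).
    right. destruct hby as [[] | []]; lra.
Qed.

Lemma towards_or_inv_towards x0 y :
  D y -> f y <> y -> towards x0 y (f y) \/ towards x0 y (g y).
Proof.
  destruct hfg as (fD & _ & gf & _).
  destruct incr_bij_on_sym as (_ & _ & _ & _ & gmono).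
  intros Dy fy. unfold towards.
  destruct (Rle_dec x0 y), (Rdichotomy _ _ fy) as [lt | gt].
  - left; lra.
  - pose proof (gmono y (f y) Dy (fD y Dy) gt). rewrite gf in *; auto. right; lra.
  - pose proof (gmono (f y) y (fD y Dy) Dy lt). rewrite gf in *; auto. right; lra.
  - left; lra.
Qed.

Lemma zpow_window_of_towards x0 y N :
  D x0 -> D y -> f x0 = x0 -> f y <> y -> towards x0 y (f y) ->
  exists z, D z /\ f z <> z /\
    forall m, (Z.abs m <= N)%Z -> between x0 y (zpow f g m z).
Proof.
  intros Dx0 Dy fx0 fy hy. set (z := zpow f g N y).
  assert (Dz : D z) by (apply zpow_in; auto).
  exists z. split; [exact Dz | split].
  - intro fz. apply fy. enough (y = z) by congruence.
    transitivity (zpow f g (- N) z).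
    + unfold z. rewrite <- zpow_add, Z.add_opp_diag_l by auto. reflexivity.
    + apply zpow_fixed; auto.
  - intros m hm. unfold z. rewrite <- zpow_add, zpow_iter by auto.
    destruct (Z.leb_spec 0 (m + N)); [apply iter_between; auto | lia].
Qed.

End IncreasingBijection.

Lemma zpow_window D f g x0 y N :
  incr_bij_on D f g -> D x0 -> D y -> f x0 = x0 -> f y <> y ->
  exists z, D z /\ f z <> z /\
    forall m, (Z.abs m <= N)%Z -> between x0 y (zpow f g m z).
Proof.
  intros hfg Dx0 Dy fx0 fy. pose proof (incr_bij_on_sym D f g hfg) as hgf.
  pose proof hfg as (_ & _ & gf & fg & _).
  destruct (towards_or_inv_towards D f g hfg x0 y Dy fy) as [t | t].
  - apply zpow_window_of_towards; auto.
  - destruct (zpow_window_of_towards D g f hgf x0 y N) as (z & Dz & gz & hz); auto.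
    + rewrite <- fx0 at 1; auto.
    + intro E. apply fy. rewrite <- E at 1; auto.
    + exists z. split; [exact Dz | split].
      * intro E. apply gz. rewrite <- E at 1; auto.
      * intros m hm. rewrite <- (Z.opp_involutive m), zpow_opp. apply hz. lia.
Qed.

Lemma fixed_interval_dichotomy D a ai b bi n1 n2 n3 m1 m2 m3 c J :
  incr_bij_on D a ai -> incr_bij_on D b bi -> (m1 + m2 <> m3)%Z ->
  (forall x, D x -> zpow a ai n1 (zpow b bi m3 (zpow a ai n2 x)) =
     zpow b bi m1 (zpow a ai n3 (zpow b bi m2 x)) + c) ->
  is_interval J -> (forall x, J x -> D x /\ a x = x) ->
  (forall x, J x -> b x = x) \/ (forall x, J x -> b x <> x).
Proof.
  intros ha hb hm rel hJ hJa.
  assert (JD : forall x, J x -> D x) by firstorder.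
  assert (afix : forall n x, J x -> zpow a ai n x = x)
    by (intros n x Jx; apply (zpow_fixed D a ai ha); apply hJa; auto).
  destruct (classic (exists x0, J x0 /\ b x0 = x0)) as [[x0 [Jx0 bx0]] | none].
  2: { right. intros x Jx bx. apply none. eauto. }
  left. intros y Jy. apply NNPP. intro ny.
  assert (bfix : forall n, zpow b bi n x0 = x0)
    by (intros; apply (zpow_fixed D b bi hb); auto).
  assert (c0 : c = 0).
  { pose proof (rel x0 (JD _ Jx0)) as r.
    rewrite (afix n2 x0), bfix, (afix n1 x0), bfix, (afix n3 x0), bfix in r by auto.
    lra. }
  destruct (zpow_window D b bi x0 y (Z.abs m2 + Z.abs m3)) as (z & Dz & bz & hz); auto.
  assert (Jorb : forall m, (Z.abs m <= Z.abs m2 + Z.abs m3)%Z -> J (zpow b bi m z))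
    by (intros m hm'; apply (interval_between J x0 y); auto).
  assert (Jz : J z) by exact (Jorb 0%Z ltac:(lia)).
  assert (J2 : J (zpow b bi m2 z)) by (apply Jorb; lia).
  assert (J3 : J (zpow b bi m3 z)) by (apply Jorb; lia).
  pose proof (rel z Dz) as r.
  rewrite (afix n2 z Jz), (afix n1 _ J3), (afix n3 _ J2), c0, Rplus_0_r,
    <- (zpow_add D b bi hb) in r by auto.
  apply hm. symmetry. exact (zpow_inj_nonfixed D b bi hb _ _ z Dz bz r).
Qed.

Lemma homeo_I_incr_bij f g : is_homeo_plus_I f g -> incr_bij_on inI f g.
Proof. unfold is_homeo_plus_I, incr_bij_on. tauto. Qed.

Definition int_equivariant (h : R -> R) : Prop :=
  forall k x, h (x + IZR k) = h x + IZR k.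

Lemma int_equivariant_sub h : int_equivariant h ->
  forall k x, h (x - IZR k) = h x - IZR k.
Proof. intros e k x. unfold Rminus. rewrite <- opp_IZR. apply e. Qed.

Lemma lift_incr_bij F G : is_lift_homeo_plus_S1 F G -> incr_bij_on (fun _ => True) F G.
Proof. intros (_ & mono & _ & GF & FG). repeat split; auto. Qed.

Section Lifts.

Variables F G : R -> R.
Hypothesis hF : is_lift_homeo_plus_S1 F G.

Lemma lift_equivariant : int_equivariant F.
Proof.
  destruct hF as (_ & _ & per & _).
  intros k. induction k as [| k IH | k IH] using Z.peano_ind; intros x.
  - rewrite !Rplus_0_r. reflexivity.
  - unfold Z.succ. rewrite plus_IZR, <- Rplus_assoc, per, IH. ring.
  - unfold Z.pred. rewrite plus_IZR.
    pose proof (per (x + (IZR k + -1))) as e.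
    replace (x + (IZR k + -1) + 1) with (x + IZR k) in e by ring.
    rewrite IH in e. lra.
Qed.

Lemma lift_inv_equivariant : int_equivariant G.
Proof.
  destruct hF as (_ & _ & _ & GF & FG).
  intros k x. rewrite <- (FG x) at 1. rewrite <- lift_equivariant. apply GF.
Qed.

Lemma zpow_lift_translate n t x : zpow F G n (x - IZR t) = zpow F G n x - IZR t.
Proof.
  pose proof (lift_incr_bij F G hF) as h.
  induction n as [| n IH | n IH] using Z.peano_ind; [reflexivity | |].
  - unfold Z.succ. rewrite !(zpow_succ _ F G h), IH by exact I.
    apply int_equivariant_sub, lift_equivariant.
  - replace (Z.pred n) with (n - 1)%Z by lia.
    rewrite !(zpow_pred _ F G h), IH by exact I.
    apply int_equivariant_sub, lift_inv_equivariant.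
Qed.

Definition lift_sub (k : Z) : R -> R := fun x => F x - IZR k.
Definition lift_sub_inv (k : Z) : R -> R := fun x => G (x + IZR k).

Lemma lift_sub_is_lift k : is_lift_homeo_plus_S1 (lift_sub k) (lift_sub_inv k).
Proof.
  destruct hF as (cont & mono & per & GF & FG). unfold lift_sub, lift_sub_inv.
  repeat split.
  - apply (continuity_minus F (fun _ => IZR k) cont).
    apply continuity_const. intros ? ?. reflexivity.
  - intros x y xy. specialize (mono x y xy). lra.
  - intros x. rewrite per. ring.
  - intros x. replace (F x - IZR k + IZR k) with (F x) by ring. auto.
  - intros x. rewrite FG. ring.
Qed.

Lemma zpow_lift_sub k n x :
  zpow (lift_sub k) (lift_sub_inv k) n x = zpow F G n x - IZR (n * k).
Proof.
  pose proof (lift_incr_bij F G hF) as h.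
  pose proof (lift_incr_bij _ _ (lift_sub_is_lift k)) as hk.
  induction n as [| n IH | n IH] using Z.peano_ind; [simpl; ring | |].
  - unfold Z.succ. rewrite (zpow_succ _ _ _ hk), (zpow_succ _ F G h), IH by exact I.
    unfold lift_sub. rewrite int_equivariant_sub by apply lift_equivariant.
    rewrite Z.mul_add_distr_r, Z.mul_1_l, plus_IZR. ring.
  - replace (Z.pred n) with (n - 1)%Z by lia.
    rewrite (zpow_pred _ _ _ hk), (zpow_pred _ F G h), IH by exact I.
    unfold lift_sub_inv.
    replace (zpow F G n x - IZR (n * k) + IZR k)
      with (zpow F G n x - IZR ((n - 1) * k)) by (rewrite Z.mul_sub_distr_r, Z.mul_1_l, minus_IZR; ring).
    apply int_equivariant_sub, lift_inv_equivariant.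
Qed.

Lemma lift_displacement_bound x0 k0 : F x0 = x0 + IZR k0 ->
  forall x, -1 < F x - x - IZR k0 < 1.
Proof.
  destruct hF as (_ & mono & per & _).
  intros e0 x. destruct (base_Int_part (x - x0)) as [b1 b2].
  set (n := Int_part (x - x0)) in *.
  set (x' := x - IZR n).
  assert (Fx' : F x' = F x - IZR n) by apply int_equivariant_sub, lift_equivariant.
  assert (F x0 <= F x').
  { assert (l : x0 <= x') by (unfold x'; lra).
    destruct l as [lt | <-]; [left; auto | right; reflexivity]. }
  assert (F x' < F (x0 + 1)) by (apply mono; unfold x'; lra).
  rewrite per in *. unfold x' in *. lra.
Qed.

Lemma liftFix_iff x0 k0 : F x0 = x0 + IZR k0 ->
  forall x, liftFix F x <-> lift_sub k0 x = x.
Proof.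
  intros e0 x. unfold liftFix, lift_sub. split.
  - intros [k ek]. pose proof (lift_displacement_bound x0 k0 e0 x) as bd.
    rewrite ek in bd.
    assert (k = k0).
    { apply Z.le_antisymm; apply Z.lt_succ_r; apply lt_IZR;
        rewrite succ_IZR; lra. }
    subst. lra.
  - intros e. exists k0. lra.
Qed.

End Lifts.

Theorem lemma3p7 :
  (* Case 1: a, b in Homeo_+(I) *)
  (forall (a ai b bi : R -> R) (n1 n2 n3 m1 m2 m3 : Z),
     is_homeo_plus_I a ai -> is_homeo_plus_I b bi ->
     (m1 + m2 <> m3)%Z ->
     (forall x, inI x ->
        zpow a ai n1 (zpow b bi m3 (zpow a ai n2 x)) =
        zpow b bi m1 (zpow a ai n3 (zpow b bi m2 x))) ->
     forall J : R -> Prop,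
       is_interval J -> nontrivial J ->
       (forall x, J x -> inI x /\ a x = x) ->
       (forall x, J x -> b x = x) \/ (forall x, J x -> b x <> x))
  /\
  (* Case 2: a, b in Homeo_+(S^1), each with a fixed point, given by lifts *)
  (forall (A Ai B Bi : R -> R) (n1 n2 n3 m1 m2 m3 : Z),
     is_lift_homeo_plus_S1 A Ai -> is_lift_homeo_plus_S1 B Bi ->
     (exists x, liftFix A x) -> (exists x, liftFix B x) ->
     (m1 + m2 <> m3)%Z ->
     (exists k : Z, forall x,
        zpow A Ai n1 (zpow B Bi m3 (zpow A Ai n2 x)) =
        zpow B Bi m1 (zpow A Ai n3 (zpow B Bi m2 x)) + IZR k) ->
     forall K : R -> Prop,
       is_interval K -> nontrivial K ->
       (forall x, K x -> liftFix A x) ->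
       (forall x, K x -> liftFix B x) \/ (forall x, K x -> ~ liftFix B x)).
Proof.
  split.
  - intros a ai b bi n1 n2 n3 m1 m2 m3 ha hb hm rel J hJ _ hJa.
    apply (fixed_interval_dichotomy inI a ai b bi n1 n2 n3 m1 m2 m3 0 J);
      auto using homeo_I_incr_bij.
    intros x Ix. rewrite Rplus_0_r. auto.
  - intros A Ai B Bi n1 n2 n3 m1 m2 m3 hA hB [xa [ka ea]] [xb [kb eb]] hm [k rel]
      K hK _ hKa.
    pose proof (liftFix_iff A Ai hA xa ka ea) as fixA.
    pose proof (liftFix_iff B Bi hB xb kb eb) as fixB.
    destruct (fixed_interval_dichotomy (fun _ => True)
      (lift_sub A ka) (lift_sub_inv Ai ka) (lift_sub B kb) (lift_sub_inv Bi kb)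
      n1 n2 n3 m1 m2 m3 (IZR (k - n2*ka - m3*kb - n1*ka + m2*kb + n3*ka + m1*kb)) K)
      as [L | L]; auto using lift_incr_bij, lift_sub_is_lift.
    + intros x _. rewrite !zpow_lift_sub by assumption.
      rewrite !zpow_lift_translate, rel by assumption.
      rewrite !plus_IZR, !minus_IZR. ring.
    + intros x Kx. split; [exact I | apply fixA; auto].
    + left. intros x Kx. apply fixB. auto.
    + right. intros x Kx hx. apply (L x Kx). apply fixB. auto.
Qed.
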